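(* Let $m,n,k\ge0$ with $k\ge n$. The $(A_{m+k-n},A_k)$-bimodule $A_{m+k-n}\otimes_{A_{k-n}}A_k$ is indecomposable.
   Context: $A_j$ is the nilCoxeter algebra: the unital $\mathbb{Q}$-algebra generated by $Y_1,\dots,Y_{j-1}$ with relations $Y_i^2=0$, $Y_iY_l=Y_lY_i$ for $|i-l|>1$, $Y_iY_{i+1}Y_i=Y_{i+1}Y_iY_{i+1}$. For $a\le b$, $A_a$ is viewed as a subalgebra of $A_b$ via $Y_i\mapsto Y_i$. In the tensor product, $A_{m+k-n}$ is a right $A_{k-n}$-module and $A_k$ a left $A_{k-n}$-module via these inclusions; the bimodule structure comes from left multiplication by $A_{m+k-n}$ and right multiplication by $A_k$. *)

From HB Require Import structures.
From mathcomp Require Import all_boot all_order all_algebra all_fingroup.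
Set Implicit Arguments. Unset Strict Implicit. Unset Printing Implicit Defensive.
Import Order.TTheory GRing.Theory Num.Theory.
Local Open Scope ring_scope.

(* The nilCoxeter algebra A_j over Q, realised on its standard basis          *)

Definition perm_len (j : nat) (w : 'S_j) : nat :=
  #|[set ij : 'I_j * 'I_j | (ij.1 < ij.2)%N && (w ij.2 < w ij.1)%N]|.

Definition NCA (j : nat) := {ffun 'S_j -> rat^o}.

Definition NCY (j : nat) (w : 'S_j) : NCA j := [ffun u => (u == w)%:R].

Definition NCmul (j : nat) (x y : NCA j) : NCA j :=
  \sum_(u : 'S_j) \sum_(v : 'S_j)
     (x u * y v) *: (if perm_len (u * v)%g == (perm_len u + perm_len v)%N
                     then NCY (u * v)%g else 0).

(* simple reflection s_i and generator Y_i (i < j-1, 0-based) *)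
Definition NCgen (j : nat) (i : nat) : NCA j :=
  match j return NCA j with
  | 0 => 0
  | j'.+1 => if (i.+1 < j'.+1)%N
             then NCY (tperm (inord i : 'I_j'.+1) (inord i.+1)) else 0
  end.

Definition perm_ext_fun (a b : nat) (h : (a <= b)%N) (s : 'S_a) (i : 'I_b) : 'I_b :=
  if insub (val i) : option 'I_a is Some i' then widen_ord h (s i') else i.

Lemma perm_ext_inj (a b : nat) (h : (a <= b)%N) (s : 'S_a) :
  injective (perm_ext_fun h s).
Proof.
move=> i j; rewrite /perm_ext_fun.
case: insubP => [i' Hi Ei|Hi]; case: insubP => [j' Hj Ej|Hj] //=.
- move/(congr1 val) => /= /val_inj /perm_inj Eij.
  by apply: val_inj; rewrite -Ei -Ej Eij.
- by move=> E; move: Hj; rewrite -E /= ltn_ord.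
- by move=> E; move: Hi; rewrite E /= ltn_ord.
Qed.

Definition perm_ext (a b : nat) (h : (a <= b)%N) (s : 'S_a) : 'S_b :=
  perm (@perm_ext_inj a b h s).

Definition NCincl (a b : nat) (h : (a <= b)%N) (x : NCA a) : NCA b :=
  \sum_(w : 'S_a) x w *: NCY (perm_ext h w).

(* The Q-tensor product A_p (x)_Q A_k, on the basis Y_u (x) Y_v.             *)
Definition NCtens (p k : nat) := {ffun 'S_p * 'S_k -> rat^o}.

Definition tens (p k : nat) (x : NCA p) (y : NCA k) : NCtens p k :=
  [ffun uv => x uv.1 * y uv.2].

Definition tens_lact (p k : nat) (a : NCA p) (t : NCtens p k) : NCtens p k :=
  \sum_(uv : 'S_p * 'S_k) t uv *: tens (NCmul a (NCY uv.1)) (NCY uv.2).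
Definition tens_ract (p k : nat) (t : NCtens p k) (b : NCA k) : NCtens p k :=
  \sum_(uv : 'S_p * 'S_k) t uv *: tens (NCY uv.1) (NCmul (NCY uv.2) b).

Section Bimod.
Variables (V : lmodType rat) (A B : Type) (L : A -> V -> V) (R : V -> B -> V).

Definition subspace (U : V -> Prop) : Prop :=
  [/\ U 0, (forall x y, U x -> U y -> U (x + y)) & (forall (c : rat) x, U x -> U (c *: x))].

Definition span (G : V -> Prop) : V -> Prop :=
  fun x => forall U, subspace U -> (forall g, G g -> U g) -> U x.

Definition subbimod (U : V -> Prop) : Prop :=
  [/\ subspace U, (forall a x, U x -> U (L a x)) & (forall x b, U x -> U (R x b))].

(* For a sub-bimodule W of V, "the bimodule V / W is indecomposable":
   V / W is nonzero, and whenever V / W = U1/W (+) U2/W (internal direct sum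
   of sub-bimodules, which correspond to sub-bimodules U1, U2 of V containing
   W), one of the summands U1/W, U2/W is zero. *)
Definition quot_indecomposable (W : V -> Prop) : Prop :=
  (exists x, ~ W x) /\
  forall U1 U2 : V -> Prop,
    subbimod U1 -> subbimod U2 ->
    (forall w, W w -> U1 w) -> (forall w, W w -> U2 w) ->
    (forall x, exists x1 x2, [/\ U1 x1, U2 x2 & x = x1 + x2]) ->
    (forall x, U1 x -> U2 x -> W x) ->
    (forall x, U1 x -> W x) \/ (forall x, U2 x -> W x).
End Bimod.

Definition tens_over_rel (p q k : nat) (hp : (q <= p)%N) (hk : (q <= k)%N)
    : NCtens p k -> Prop :=
  span (fun t : NCtens p k => exists (x : NCA p) (c : NCA q) (y : NCA k),
          t = tens (NCmul x (NCincl hp c)) y - tens x (NCmul (NCincl hk c) y)).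

Definition tensor_bimod_indecomposable (p q k : nat) (hp : (q <= p)%N) (hk : (q <= k)%N)
    : Prop :=
  quot_indecomposable (@tens_lact p k) (@tens_ract p k) (tens_over_rel hp hk).

Lemma le_kn_mkn (m n k : nat) : (k - n <= m + k - n)%N.
Proof. by apply: leq_sub2r; apply: leq_addl. Qed.

From mathcomp Require Import all_boot all_order all_algebra all_fingroup.
From mathcomp Require Import zify.
Set Implicit Arguments. Unset Strict Implicit. Unset Printing Implicit Defensive.
Import GRing.Theory.
Local Open Scope ring_scope.

(* The coefficient of [Y_1 (x) Y_1] is the tensor square of the augmentation
   [A_j -> Q], [Y_w |-> [w = 1]], which is multiplicative and compatible with
   the inclusions; hence it vanishes on the relations of the tensor product
   over [A_q], and [Y_1 (x) Y_1] is nonzero in the quotient.  Since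
   [Y_u * t * Y_v = t(1,1) Y_u (x) Y_v + (terms of larger Coxeter length)],
   downward induction on length shows that a sub-bimodule containing some [t]
   with [t(1,1) <> 0] is everything.  In a decomposition
   [Y_1 (x) Y_1 = x1 + x2] one of [x1, x2] has such a coefficient, so its
   summand is everything and the other summand lies in the intersection,
   i.e. is zero in the quotient. *)

Lemma perm_len1 j : perm_len (1%g : 'S_j) = 0%N.
Proof.
apply/eqP; rewrite cards_eq0; apply/eqP/setP => -[i l].
by rewrite !inE /= !perm1; case: ltngtP.
Qed.

Lemma perm_len_le j (w : 'S_j) : (perm_len w <= j * j)%N.
Proof. by rewrite /perm_len (leq_trans (max_card _)) // card_prod card_ord. Qed.

Lemma leq_ord_incr j (f : 'I_j -> 'I_j) :
  {homo f : i l / (i < l)%N} -> forall i : 'I_j, (i <= f i)%N.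
Proof.
move=> f_mono [i lt_ij]; elim: i lt_ij => [|i IHi] lt_ij //=.
have lt_ij' := ltnW lt_ij.
exact: leq_ltn_trans (IHi lt_ij') (f_mono (Ordinal lt_ij') (Ordinal lt_ij) _).
Qed.

Lemma perm_len_eq0 j (w : 'S_j) : (perm_len w == 0%N) = (w == 1%g).
Proof.
apply/idP/eqP => [|->]; last by rewrite perm_len1.
rewrite cards_eq0 => /eqP noinv.
have w_mono : {homo w : i l / (i < l)%N}.
  move=> i l lt_il; have := in_set0 (i, l); rewrite -noinv inE /= lt_il /= ltnNge.
  move/negbFE; rewrite leq_eqVlt => /orP[/eqP/val_inj/perm_inj eq_il|//].
  by rewrite eq_il ltnn in lt_il.
have le_w := leq_ord_incr w_mono.
(* [w] moves no point down and preserves [\sum_i i], so it moves no point. *)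
have : (\sum_(i : 'I_j) i <= \sum_(i : 'I_j) w i ?= iff [forall i : 'I_j, val i == val (w i)])%N.
  by apply: leqif_sum => i _; apply/leqif_eq/le_w.
case=> _; rewrite {1}(reindex_inj (@perm_inj _ w)) eqxx.
move=> /esym/forallP eq_w; apply/permP => i.
by apply/val_inj; rewrite perm1 -(eqP (eq_w i)).
Qed.

Lemma perm_ext_eq1 a b (h : (a <= b)%N) (w : 'S_a) :
  (perm_ext h w == 1%g) = (w == 1%g).
Proof.
apply/eqP/eqP => [ext_w1|->]; apply/permP => i; rewrite perm1; last first.
  rewrite permE /perm_ext_fun; case: insubP => // i' _ val_i'.
  by apply/val_inj; rewrite /= perm1 val_i'.
have := congr1 (fun s : 'S_b => val (s (widen_ord h i))) ext_w1.
by rewrite perm1 permE /perm_ext_fun /= valK /= => /val_inj.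
Qed.

Definition NCprod j (u v : 'S_j) : NCA j :=
  if perm_len (u * v)%g == (perm_len u + perm_len v)%N then NCY (u * v)%g else 0.

Lemma NCmulY j (u v : 'S_j) : NCmul (NCY u) (NCY v) = NCprod u v.
Proof.
rewrite /NCmul (big_only1 u) // => [|u' /negbTE u'_neq _]; last first.
  by rewrite big1 // => v' _; rewrite ffunE u'_neq mul0r scale0r.
rewrite (big_only1 v) // => [|v' /negbTE v'_neq _]; last first.
  by rewrite [NCY v v']ffunE v'_neq mulr0 scale0r.
by rewrite !ffunE !eqxx mulr1 scale1r.
Qed.

Lemma NCprod1g j (v : 'S_j) : NCprod 1%g v = NCY v.
Proof. by rewrite /NCprod mul1g perm_len1 eqxx. Qed.

Lemma NCprodg1 j (u : 'S_j) : NCprod u 1%g = NCY u.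
Proof. by rewrite /NCprod mulg1 perm_len1 addn0 eqxx. Qed.

Lemma NCprod_coef1 j (u v : 'S_j) :
  NCprod u v 1%g = ((u == 1%g) && (v == 1%g))%:R.
Proof.
have [/andP[/eqP-> /eqP->]|not_11] := boolP ((u == 1%g) && (v == 1%g)).
  by rewrite NCprod1g ffunE eqxx.
rewrite /NCprod; case: ifP => [/eqP len_uv|_]; rewrite ffunE //.
case: eqP => // uv1; move: not_11 len_uv; rewrite -uv1 perm_len1.
by move=> /negP not_11 /esym/eqP; rewrite addn_eq0 !perm_len_eq0.
Qed.

Lemma NCmul_coef1 j (x y : NCA j) : NCmul x y 1%g = x 1%g * y 1%g.
Proof.
rewrite /NCmul sum_ffunE (big_only1 1%g) // => [|u /negbTE u_neq1 _]; last first.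
  by rewrite sum_ffunE big1 // => v _; rewrite ffunE NCprod_coef1 u_neq1 scaler0.
rewrite sum_ffunE (big_only1 1%g) // => [|v /negbTE v_neq1 _]; last first.
  by rewrite ffunE NCprod_coef1 v_neq1 andbF scaler0.
by rewrite ffunE NCprod_coef1 !eqxx; apply: mulr1.
Qed.

Lemma NCincl_coef1 a b (h : (a <= b)%N) (c : NCA a) : NCincl h c 1%g = c 1%g.
Proof.
rewrite /NCincl sum_ffunE (big_only1 1%g) // => [|w /negbTE w_neq1 _].
  by rewrite !ffunE eq_sym perm_ext_eq1 eqxx; apply: mulr1.
by rewrite !ffunE eq_sym perm_ext_eq1 w_neq1 scaler0.
Qed.

Definition NCtensY p k (u : 'S_p) (v : 'S_k) : NCtens p k := tens (NCY u) (NCY v).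

Lemma NCtensYE p k (u : 'S_p) (v : 'S_k) uv : NCtensY u v uv = (uv == (u, v))%:R.
Proof.
case: uv => u' v'; rewrite !ffunE /= xpair_eqE.
by case: (u' == u); case: (v' == v); rewrite ?mulr0 ?mulr1.
Qed.

Lemma NCtens_basis p k (t : NCtens p k) : t = \sum_uv t uv *: NCtensY uv.1 uv.2.
Proof.
apply/ffunP => uv; rewrite sum_ffunE (big_only1 uv) // => [|uv' uv'_neq _].
  by rewrite ffunE NCtensYE -surjective_pairing eqxx; apply/esym/mulr1.
by rewrite ffunE NCtensYE -surjective_pairing eq_sym (negbTE uv'_neq) scaler0.
Qed.

Lemma tens0l p k (y : NCA k) : tens (0 : NCA p) y = 0.
Proof. by apply/ffunP => uv; rewrite !ffunE mul0r. Qed.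

Lemma tens0r p k (x : NCA p) : tens x (0 : NCA k) = 0.
Proof. by apply/ffunP => uv; rewrite !ffunE mulr0. Qed.

Lemma tens_ract0 p k (y : NCA k) : tens_ract (0 : NCtens p k) y = 0.
Proof. by rewrite /tens_ract big1 // => uv _; rewrite ffunE scale0r. Qed.

Lemma tens_ractY p k (u : 'S_p) (v : 'S_k) (y : NCA k) :
  tens_ract (NCtensY u v) y = tens (NCY u) (NCmul (NCY v) y).
Proof.
rewrite /tens_ract (big_only1 (u, v)) // => [|uv uv_neq _].
  by rewrite NCtensYE eqxx scale1r.
by rewrite NCtensYE (negbTE uv_neq) scale0r.
Qed.

Lemma tens_ract_lincomb (I : finType) p k (c : I -> rat) (T : I -> NCtens p k) y :
  tens_ract (\sum_i c i *: T i) y = \sum_i c i *: tens_ract (T i) y.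
Proof.
rewrite /tens_ract; under eq_bigr => uv _ do rewrite sum_ffunE scaler_suml.
rewrite exchange_big; apply: eq_bigr => i _; rewrite scaler_sumr.
by apply: eq_bigr => uv _; rewrite ffunE scalerA.
Qed.

Lemma tens_lractY p k (u : 'S_p) (v : 'S_k) (t : NCtens p k) :
  tens_ract (tens_lact (NCY u) t) (NCY v) =
  \sum_ab t ab *: tens (NCprod u ab.1) (NCprod ab.2 v).
Proof.
have -> : tens_lact (NCY u) t = \sum_ab t ab *: tens (NCprod u ab.1) (NCY ab.2).
  by apply: eq_bigr => ab _; rewrite NCmulY.
rewrite tens_ract_lincomb; apply: eq_bigr => ab _; congr (_ *: _).
rewrite /NCprod; case: ifP => _; last by rewrite !tens0l tens_ract0.
by rewrite tens_ractY NCmulY.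
Qed.

Section SubbimoduleGeneration.
Variables (p k : nat) (U : NCtens p k -> Prop).
Hypothesis U_bimod : subbimod (@tens_lact p k) (@tens_ract p k) U.

Lemma subbimod_sum (I : finType) (P : pred I) (F : I -> NCtens p k) :
  (forall i, P i -> U (F i)) -> U (\sum_(i | P i) F i).
Proof. by case: U_bimod => -[U0 UD _] _ _; apply: big_ind. Qed.

Lemma subbimod_coef11_full (x : NCtens p k) :
  U x -> x (1%g, 1%g) != 0 -> forall t, U t.
Proof.
case: (U_bimod) => -[U0 UD UZ] UL UR Ux x11_neq0.
suff U_Y n (u : 'S_p) (v : 'S_k) :
    (p * p + k * k < perm_len u + perm_len v + n)%N -> U (NCtensY u v).
  move=> t; rewrite (NCtens_basis t); apply: subbimod_sum => uv _.
  by apply/UZ/(U_Y (p * p + k * k).+1); rewrite ltn_addl.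
(* Downward induction on [perm_len u + perm_len v <= p * p + k * k]. *)
elim: n u v => [|n IHn] u v len_uv.
  rewrite addn0 in len_uv.
  by have := leq_add (perm_len_le u) (perm_len_le v); rewrite leqNgt len_uv.
have U_higher :
    U (\sum_(ab | ab != (1%g, 1%g)) x ab *: tens (NCprod u ab.1) (NCprod ab.2 v)).
  apply: subbimod_sum => -[a b] ab_neq11; apply: UZ.
  rewrite /NCprod /=; case: ifP => [/eqP len_ua|_]; last by rewrite tens0l.
  case: ifP => [/eqP len_bv|_]; last by rewrite tens0r.
  apply: IHn; rewrite len_ua len_bv.
  have : (0 < perm_len a + perm_len b)%N.
    by rewrite lt0n addn_eq0 !perm_len_eq0 -xpair_eqE.
  by move: len_uv; lia.
have := UR _ (NCY v) (UL (NCY u) _ Ux).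
rewrite tens_lractY (bigD1 (1%g, 1%g)) //= NCprodg1 NCprod1g => U_sum.
have := UZ (x (1%g, 1%g))^-1 _ (UD _ _ U_sum (UZ (-1) _ U_higher)).
by rewrite scaleN1r addrK scalerA mulVf // scale1r.
Qed.

End SubbimoduleGeneration.

Lemma tens_over_rel_coef11 p q k (hp : (q <= p)%N) (hk : (q <= k)%N) (t : NCtens p k) :
  tens_over_rel hp hk t -> t (1%g, 1%g) = 0.
Proof.
move=> t_rel; apply: (t_rel (fun s => s (1%g, 1%g) = 0)); first split.
- by rewrite ffunE.
- by move=> s t' s0 t'0; rewrite ffunE s0 t'0 addr0.
- by move=> c s s0; rewrite ffunE s0; apply: mulr0.
by move=> _ [x [c [y ->]]]; rewrite !ffunE /= !NCmul_coef1 !NCincl_coef1 mulrA subrr.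
Qed.

Theorem tensor_bimod_indecomposable_any p q k (hp : (q <= p)%N) (hk : (q <= k)%N) :
  tensor_bimod_indecomposable hp hk.
Proof.
split.
  exists (NCtensY 1%g 1%g) => /tens_over_rel_coef11/eqP.
  by rewrite NCtensYE eqxx oner_eq0.
move=> U1 U2 U1_bimod U2_bimod _ _ U12_span U12_cap.
have [x1 [x2 [U1x1 U2x2 x12]]] := U12_span (NCtensY 1%g 1%g).
have := congr1 (fun t : NCtens p k => t (1%g, 1%g)) x12.
rewrite /= NCtensYE eqxx mulr1n ffunE => x12_11.
have [x1_0 | x1_neq0] := eqVneq (x1 (1%g, 1%g)) 0.
  left => x U1x; apply: U12_cap => //; apply: (subbimod_coef11_full U2_bimod U2x2).
  by rewrite x1_0 add0r in x12_11; rewrite -x12_11 oner_eq0.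
right => x U2x; apply: U12_cap => //.
exact: (subbimod_coef11_full U1_bimod U1x1 x1_neq0).
Qed.

Theorem mainTheorem8 (m n k : nat) (hnk : (n <= k)%N) :
  tensor_bimod_indecomposable (le_kn_mkn m n k) (leq_subr n k).
Proof. exact: tensor_bimod_indecomposable_any. Qed.
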